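(* Let $p\geq 3$ and let $\varphi$ be a nonzero short homomorphism of $\mathcal{T}_p$ with associated functionals $\lambda$ (on $\langle w_1,\dots,w_p\rangle$) and $\mu$ (on $\langle\mathfrak{z}_0,\dots,\mathfrak{z}_p\rangle$). Then there exist $k\in\{0,1,\dots,p\}$ and $\alpha\in\mathbb{F}$, $\alpha\neq0$, such that $\lambda=\alpha\lambda_k$ and $\mu=\alpha^2\mu_k$, where: $\lambda_0(w_i)=1$ for $1\le i\le p$, $\mu_0(\mathfrak{z}_0)=1$, $\mu_0(\mathfrak{z}_i)=0$ for $1\le i\le p$; and for $1\le k\le p$, $\lambda_k(w_j)=\delta_{kj}$, $\mu_k(\mathfrak{z}_0)=0$, $\mu_k(\mathfrak{z}_j)=\delta_{kj}$ for $1\le j\le p$. Conversely each pair $(\lambda_k,\mu_k)$ defines a short homomorphism.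
   Context: $\mathbb{F}$ is a field of characteristic not $2$. $\mathcal{T}_p$ is the normal algebra over $\mathbb{F}$ with $U$-space having basis $w_1,\dots,w_p$ and $\mathfrak{Z}$-space having basis $\mathfrak{z}_0,\mathfrak{z}_1,\dots,\mathfrak{z}_p$, commutative bilinear product given by $w_iw_j=\mathfrak{z}_0+\delta_{ij}\mathfrak{z}_i$ ($1\le i,j\le p$, $\delta$ the Kronecker delta), and all other basis products $0$. The spline algebra $\mathcal{S}$ has basis $r$ (its $U$-space) and $\mathfrak{s}$ (its $\mathfrak{Z}$-space) with $r^2=\mathfrak{s}$ and all other products $0$. A short homomorphism of a normal algebra $U\oplus\mathfrak{Z}$ is a product-preserving linear map to $\mathcal{S}$ sending $U$ into $\langle r\rangle$ and $\mathfrak{Z}$ into $\langle\mathfrak{s}\rangle$; it has the form $u+\mathfrak{z}\mapsto\lambda(u)r+\mu(\mathfrak{z})\mathfrak{s}$ for linear functionals $\lambda,\mu$ with $\mu(uv)=\lambda(u)\lambda(v)$ for all $u,v\in U$. *)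

From HB Require Import structures.
From mathcomp Require Import all_boot all_order all_algebra.
Set Implicit Arguments. Unset Strict Implicit. Unset Printing Implicit Defensive.
Import Order.TTheory GRing.Theory Num.Theory.
Local Open Scope ring_scope.

(* The normal algebra T_p = U (+) Z over a field F.
   U = F^p as row vectors 'rV_p : the basis vector w_{i+1} is wb i (i : 'I_p).
   Z = F^{p+1} as row vectors 'rV_(p.+1) : the basis vector z_j is zb j (j : 'I_p.+1),
   so z_0 = zb ord0 and z_{i+1} = zb (lift ord0 i). *)

Definition wb {F : fieldType} {p : nat} (i : 'I_p) : 'rV[F]_p := delta_mx 0 i.
Definition zb {F : fieldType} {p : nat} (j : 'I_p.+1) : 'rV[F]_p.+1 := delta_mx 0 j.

(* basis products: w_i w_j = z_0 + delta_ij z_i *)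
Definition tp_basis_mul {F : fieldType} {p : nat} (i j : 'I_p) : 'rV[F]_p.+1 :=
  zb ord0 + (i == j)%:R *: zb (lift ord0 i).

Definition tp_mul {F : fieldType} {p : nat} (u v : 'rV[F]_p) : 'rV[F]_p.+1 :=
  \sum_(i < p) \sum_(j < p) (u 0 i * v 0 j) *: tp_basis_mul i j.

Definition is_linear_functional {F : fieldType} {n : nat} (f : 'rV[F]_n -> F) : Prop :=
  forall (a : F) (x y : 'rV[F]_n), f (a *: x + y) = a * f x + f y.

(* A short homomorphism of T_p to the spline algebra S, given by its pair of
   linear functionals (lambda on U, mu on Z) with mu(uv) = lambda(u) lambda(v). *)
Definition short_hom {F : fieldType} {p : nat}
  (lam : 'rV[F]_p -> F) (mu : 'rV[F]_p.+1 -> F) : Prop :=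
  [/\ is_linear_functional lam, is_linear_functional mu &
      forall u v : 'rV[F]_p, mu (tp_mul u v) = lam u * lam v].

(* the short homomorphism u + z |-> lam(u) r + mu(z) s is nonzero *)
Definition short_hom_nonzero {F : fieldType} {p : nat}
  (lam : 'rV[F]_p -> F) (mu : 'rV[F]_p.+1 -> F) : Prop :=
  (exists u, lam u != 0) \/ (exists z, mu z != 0).

Definition lam_val {F : fieldType} {p : nat} (k : 'I_p.+1) (i : 'I_p) : F :=
  if k == ord0 then 1 else (k == lift ord0 i)%:R.
Definition mu_val {F : fieldType} {p : nat} (k : 'I_p.+1) (j : 'I_p.+1) : F :=
  if k == ord0 then (j == ord0)%:R else (k == j)%:R.

Definition lam_k {F : fieldType} {p : nat} (k : 'I_p.+1) (u : 'rV[F]_p) : F :=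
  \sum_(i < p) u 0 i * lam_val k i.
Definition mu_k {F : fieldType} {p : nat} (k : 'I_p.+1) (z : 'rV[F]_p.+1) : F :=
  \sum_(j < p.+1) z 0 j * mu_val k j.

(* A short homomorphism is determined by the values a_i = lam(w_i) and
   m_j = mu(z_j), which must satisfy m_0 + [i = j] m_i = a_i a_j.
   Off the diagonal this says a_i a_j = m_0 for all i <> j.  If m_0 <> 0,
   comparing with a third index (p >= 3) makes all a_i equal to some alpha,
   with m_0 = alpha^2 and m_i = 0: this is (lambda_0, mu_0) scaled.  If
   m_0 = 0, at most one a_k is nonzero and m_i = a_i^2, which gives
   (lambda_k, mu_k) scaled by alpha = a_k. *)

From HB Require Import structures.
From mathcomp Require Import all_boot all_order all_algebra.
From mathcomp Require Import ring.
Import Order.TTheory GRing.Theory Num.Theory.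
Set Implicit Arguments. Unset Strict Implicit.
Local Open Scope ring_scope.

Lemma exists_ord_neq2 n (i j : 'I_n) : (2 < n)%N -> exists l : 'I_n, (l != i) && (l != j).
Proof.
move=> n_gt2; have : (0 < #|~: [set i; j]|)%N.
  rewrite -(ltn_add2l #|[set i; j]|) cardsC card_ord cards2 addn0.
  by apply: leq_ltn_trans n_gt2; case: (i != j).
by case/card_gt0P => l; rewrite !inE negb_or; exists l.
Qed.

Section LinearFunctional.
Variables (F : fieldType) (n : nat) (f : 'rV[F]_n -> F).
Hypothesis f_lin : is_linear_functional f.

Lemma linfun0 : f 0 = 0.
Proof.
have := f_lin 1 0 0; rewrite scaler0 addr0 mul1r => f0.
by apply: (addrI (f 0)); rewrite addr0 -f0.
Qed.

Lemma linfunD x y : f (x + y) = f x + f y.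
Proof. by rewrite -[x]scale1r f_lin mul1r scale1r. Qed.

Lemma linfunZ a x : f (a *: x) = a * f x.
Proof. by rewrite -[a *: x]addr0 f_lin linfun0 addr0. Qed.

Lemma linfun_sum (I : Type) (r : seq I) (x : I -> 'rV[F]_n) :
  f (\sum_(i <- r) x i) = \sum_(i <- r) f (x i).
Proof.
elim: r => [|i r IHr]; first by rewrite !big_nil linfun0.
by rewrite !big_cons linfunD IHr.
Qed.

Lemma linfun_row_expansion u : f u = \sum_(i < n) u 0 i * f (delta_mx 0 i).
Proof.
by rewrite {1}(row_sum_delta u) linfun_sum; apply: eq_bigr => i _; rewrite linfunZ.
Qed.

Lemma linfun_coord_scale (c : F) (g : 'I_n -> F) :
  (forall i, f (delta_mx 0 i) = c * g i) ->
  forall u, f u = c * \sum_(i < n) u 0 i * g i.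
Proof.
move=> fg u; rewrite linfun_row_expansion mulr_sumr.
by apply: eq_bigr => i _; rewrite fg mulrCA.
Qed.

Lemma linfun_neq0_basis u : f u != 0 -> exists i, f (delta_mx 0 i) != 0.
Proof.
move=> fu_neq0; apply/existsP; apply: contraNT fu_neq0 => /existsPn f_basis0.
by rewrite linfun_row_expansion big1 // => i _; rewrite (eqP (negPn (f_basis0 i))) mulr0.
Qed.

End LinearFunctional.

Section CoordinateFunctional.
Variables (F : fieldType) (n : nat) (g : 'I_n -> F).

Lemma coord_sum_linear : is_linear_functional (fun u : 'rV[F]_n => \sum_(i < n) u 0 i * g i).
Proof.
move=> a x y; rewrite mulr_sumr -big_split; apply: eq_bigr => i _.
by rewrite !mxE mulrDl mulrA.
Qed.

Lemma coord_sum_delta i : \sum_(i' < n) (delta_mx 0 i : 'rV[F]_n) 0 i' * g i' = g i.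
Proof.
rewrite (bigD1 i) //= mxE !eqxx mul1r big1 ?addr0 // => i' /negbTE i'_neq_i.
by rewrite mxE i'_neq_i andbF mul0r.
Qed.

End CoordinateFunctional.

Section ShortHomBasis.
Variables (F : fieldType) (p : nat).

Definition short_hom_on_basis (a : 'I_p -> F) (m : 'I_p.+1 -> F) : Prop :=
  forall i j, m ord0 + (i == j)%:R * m (lift ord0 i) = a i * a j.

Lemma short_homP (lam : 'rV[F]_p -> F) (mu : 'rV[F]_p.+1 -> F) :
  is_linear_functional lam -> is_linear_functional mu ->
  (forall u v, mu (tp_mul u v) = lam u * lam v) <->
  short_hom_on_basis (fun i => lam (wb i)) (fun j => mu (zb j)).
Proof.
move=> lam_lin mu_lin.
have mu_basis i j :
    mu (tp_basis_mul i j) = mu (zb ord0) + (i == j)%:R * mu (zb (lift ord0 i)).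
  by rewrite linfunD // linfunZ.
have mu_tp_mul u v : mu (tp_mul u v) =
    \sum_(i < p) \sum_(j < p) u 0 i * (v 0 j * mu (tp_basis_mul i j)).
  rewrite linfun_sum //; apply: eq_bigr => i _.
  by rewrite linfun_sum //; apply: eq_bigr => j _; rewrite linfunZ // mulrA.
split=> [lam_mu i j | hom u v].
  rewrite -mu_basis -lam_mu mu_tp_mul /wb.
  under eq_bigr do rewrite -mulr_sumr coord_sum_delta.
  by rewrite coord_sum_delta.
rewrite mu_tp_mul (linfun_row_expansion lam_lin u) (linfun_row_expansion lam_lin v).
rewrite big_distrl; apply: eq_bigr => i _; rewrite big_distrr; apply: eq_bigr => j _ /=.
by rewrite mu_basis hom /wb; ring.
Qed.

Lemma lam_val_ord0 (i : 'I_p) : lam_val ord0 i = 1 :> F.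
Proof. by rewrite /lam_val eqxx. Qed.

Lemma lam_val_lift (k i : 'I_p) : lam_val (lift ord0 k) i = (k == i)%:R :> F.
Proof. by rewrite /lam_val lift_eqF (inj_eq (@lift_inj _ _)). Qed.

Lemma mu_val_ord0 (k : 'I_p.+1) : mu_val k ord0 = (k == ord0)%:R :> F.
Proof. by rewrite /mu_val; case: eqVneq. Qed.

Lemma mu_val_lift (k : 'I_p.+1) (i : 'I_p) :
  mu_val k (lift ord0 i) = (k == lift ord0 i)%:R :> F.
Proof. by rewrite /mu_val; case: eqVneq => // ->; rewrite lift_eqF eq_liftF. Qed.

Lemma short_hom_on_basis_val (k : 'I_p.+1) : short_hom_on_basis (lam_val k) (mu_val k).
Proof.
move=> i j; rewrite mu_val_ord0 mu_val_lift.
case: (unliftP ord0 k) => [l ->|->]; last first.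
  by rewrite eqxx eq_liftF !lam_val_ord0 mulr0 addr0 mulr1.
rewrite lift_eqF add0r (inj_eq (@lift_inj _ _)) !lam_val_lift.
by rewrite -!natrM !mulnb; case: (eqVneq l i) => [->|]; rewrite ?andbT ?andbF.
Qed.

End ShortHomBasis.

Section BasisClassification.
Variables (F : fieldType) (p : nat) (a : 'I_p -> F) (m : 'I_p.+1 -> F).
Hypothesis hom : short_hom_on_basis a m.

Lemma basis_off_diag i j : i != j -> a i * a j = m ord0.
Proof. by move=> /negbTE i_neq_j; rewrite -hom i_neq_j mul0r addr0. Qed.

Lemma basis_diag i : a i ^+ 2 = m ord0 + m (lift ord0 i).
Proof. by rewrite expr2 -hom eqxx mul1r. Qed.

Section NonzeroCenter.
Hypotheses (p_gt2 : (2 < p)%N) (m0_neq0 : m ord0 != 0).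

Lemma basis_const i j : a i = a j.
Proof.
have [l /andP [l_neq_i l_neq_j]] := exists_ord_neq2 i j p_gt2.
have al_neq0 : a l != 0.
  by apply: contra m0_neq0 => /eqP al0; rewrite -(basis_off_diag l_neq_i) al0 mul0r.
by apply: (mulIf al_neq0); rewrite !(mulrC _ (a l)) !basis_off_diag.
Qed.

Lemma basis_sqr_center i : a i ^+ 2 = m ord0.
Proof.
have [l /andP [l_neq_i _]] := exists_ord_neq2 i i p_gt2.
by rewrite expr2 {2}(basis_const i l) basis_off_diag // eq_sym.
Qed.

Lemma basis_lift_eq0 i : m (lift ord0 i) = 0.
Proof. by apply: (addrI (m ord0)); rewrite -basis_diag basis_sqr_center addr0. Qed.

End NonzeroCenter.

Section ZeroCenter.
Hypothesis m0_eq0 : m ord0 = 0.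

Lemma basis_lift_sqr i : m (lift ord0 i) = a i ^+ 2.
Proof. by rewrite basis_diag m0_eq0 add0r. Qed.

Lemma basis_support1 i j : a i != 0 -> j != i -> a j = 0.
Proof.
move=> ai_neq0 j_neq_i; apply: (mulfI ai_neq0).
by rewrite basis_off_diag 1?eq_sym // m0_eq0 mulr0.
Qed.

End ZeroCenter.

Lemma short_hom_on_basis_classify : (2 < p)%N ->
  (exists i, a i != 0) \/ (exists j, m j != 0) ->
  exists (k : 'I_p.+1) (alpha : F), [/\ alpha != 0,
    forall i, a i = alpha * lam_val k i & forall j, m j = alpha ^+ 2 * mu_val k j].
Proof.
move=> p_gt2 nz; have [m0_eq0|m0_neq0] := eqVneq (m ord0) 0; last first.
  pose i0 : 'I_p := Ordinal (ltnW (ltnW p_gt2)).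
  exists ord0, (a i0); split=> [|i|j].
  - by rewrite -sqrf_eq0 basis_sqr_center.
  - by rewrite lam_val_ord0 mulr1 (basis_const p_gt2 m0_neq0 i i0).
  case: (unliftP ord0 j) => [t ->|->].
    by rewrite (basis_lift_eq0 p_gt2 m0_neq0) mu_val_lift eq_liftF mulr0.
  by rewrite mu_val_ord0 eqxx mulr1 (basis_sqr_center p_gt2 m0_neq0 i0).
have [i ai_neq0] : exists i, a i != 0.
  case: nz => [//|[j]]; case: (unliftP ord0 j) => [t ->|->]; last by rewrite m0_eq0 eqxx.
  rewrite basis_lift_sqr // => at_sqr_neq0; exists t.
  by apply: contra at_sqr_neq0 => /eqP ->; rewrite expr2 mul0r.
exists (lift ord0 i), (a i); split=> // j.
  rewrite lam_val_lift; case: (eqVneq i j) => [<-|i_neq_j]; first by rewrite mulr1.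
  by rewrite mulr0 (basis_support1 m0_eq0 ai_neq0) // eq_sym.
case: (unliftP ord0 j) => [t ->|->]; last by rewrite mu_val_ord0 lift_eqF m0_eq0 mulr0.
rewrite mu_val_lift (inj_eq (@lift_inj _ _)) basis_lift_sqr //.
case: (eqVneq i t) => [<-|i_neq_t]; first by rewrite mulr1.
by rewrite mulr0 (basis_support1 m0_eq0 ai_neq0) ?expr2 ?mul0r // eq_sym.
Qed.

End BasisClassification.

Theorem lemma7p1 (F : fieldType) (p : nat) :
  (2%:R : F) != 0 -> (3 <= p)%N ->
  (forall (lam : 'rV[F]_p -> F) (mu : 'rV[F]_p.+1 -> F),
      short_hom lam mu -> short_hom_nonzero lam mu ->
      exists (k : 'I_p.+1) (alpha : F),
        [/\ alpha != 0,
            (forall u, lam u = alpha * lam_k k u) &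
            (forall z, mu z = alpha ^+ 2 * mu_k k z)])
  /\ (forall k : 'I_p.+1, short_hom (@lam_k F p k) (@mu_k F p k)).
Proof.
move=> _ p_ge3; split=> [lam mu [lam_lin mu_lin lam_mu] nz | k].
  have hom := (short_homP lam_lin mu_lin).1 lam_mu.
  have nz_basis : (exists i, lam (wb i) != 0) \/ (exists j, mu (zb j) != 0).
    by case: nz => [[u /(linfun_neq0_basis lam_lin)]|[z /(linfun_neq0_basis mu_lin)]]; auto.
  have [k [alpha [alpha_neq0 lam_basis mu_basis]]] :=
    short_hom_on_basis_classify hom p_ge3 nz_basis.
  by exists k, alpha; split=> // [u|z]; apply: linfun_coord_scale.
have lam_lin := coord_sum_linear (@lam_val F p k).
have mu_lin := coord_sum_linear (@mu_val F p k).
split=> //; apply/short_homP => // i j /=.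
by rewrite /lam_k /mu_k /wb /zb !coord_sum_delta short_hom_on_basis_val.
Qed.
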